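(* Let $k$ be an algebraically closed field of characteristic zero, $\mathfrak g$ a nilpotent Lie algebra over $k$ of dimension $n\ge 2$, and $(A,\cdot)$ an LR-structure on $\mathfrak g$ such that the commuting family $\{L(x):x\in A\}$ has a single weight $\alpha$ on $A$, with $\alpha\neq 0$ (i.e., each $L(x)$ has the single eigenvalue $\alpha(L(x))$, and $\alpha$ is not identically zero). Let $e_1,\dots,e_n$ be a basis of $A$ in which all $L(x)$ are upper triangular, normalized so that $\alpha(L(e_n))=1$ and $\alpha(L(e_k))=0$ for $1\le k\le n-1$. Write $L(e_k)=(a^k_{i,j})_{1\le i,j\le n}$. Then $a^k_{n-1,n}=0$ for all $k=1,\dots,n-2$, and the subspace $\mathrm{span}(e_1,\dots,e_{n-2})$ is a two-sided ideal of $A$.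
   Context: An LR-algebra is a vector space $A$ with a bilinear product $\cdot$ satisfying $x\cdot(y\cdot z)=y\cdot(x\cdot z)$ and $(x\cdot y)\cdot z=(x\cdot z)\cdot y$ for all $x,y,z\in A$. An LR-structure on a Lie algebra $\mathfrak g$ is an LR-algebra product on the underlying vector space of $\mathfrak g$ with $x\cdot y-y\cdot x=[x,y]$. $L(x)y=x\cdot y$. (In this setting a basis with the stated normalization always exists.) *)

From HB Require Import structures.
From mathcomp Require Import all_boot all_order all_algebra all_field.
Set Implicit Arguments. Unset Strict Implicit. Unset Printing Implicit Defensive.
Import GRing.Theory.
Local Open Scope ring_scope.

(* The algebra A is modelled on coordinates w.r.t. the basis e_1..e_n:
   A = 'cV[K]_n, e_i = the i-th standard column vector (0-indexed). *)
Definition basis_vec (K : fieldType) (n : nat) (i : 'I_n) : 'cV[K]_n :=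
  delta_mx i 0.

Definition bilinear_prod (K : fieldType) (n : nat)
    (mul : 'cV[K]_n -> 'cV[K]_n -> 'cV[K]_n) : Prop :=
  (forall (a : K) x y z, mul (a *: x + y) z = a *: mul x z + mul y z) /\
  (forall (a : K) x y z, mul x (a *: y + z) = a *: mul x y + mul x z).

Definition LR_identities (K : fieldType) (n : nat)
    (mul : 'cV[K]_n -> 'cV[K]_n -> 'cV[K]_n) : Prop :=
  (forall x y z, mul x (mul y z) = mul y (mul x z)) /\
  (forall x y z, mul (mul x y) z = mul (mul x z) y).

Definition lie_bracket (K : fieldType) (n : nat)
    (mul : 'cV[K]_n -> 'cV[K]_n -> 'cV[K]_n) (x y : 'cV[K]_n) : 'cV[K]_n :=
  mul x y - mul y x.

(* Nilpotency of a Lie algebra: some term of the lower central series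
   vanishes, i.e. all m-fold iterated brackets [x1,[x2,...,[xm,y]...]] are 0. *)
Definition lie_nilpotent (K : fieldType) (n : nat)
    (br : 'cV[K]_n -> 'cV[K]_n -> 'cV[K]_n) : Prop :=
  exists m : nat, forall (xs : seq 'cV[K]_n) (y : 'cV[K]_n),
    size xs = m -> foldr br y xs = 0.

(* Matrix of the left multiplication L(x) in the basis e: column j holds the
   coordinates of L(x) e_j, so entry (i,j) is a_{i,j}. *)
Definition Lmx (K : fieldType) (n : nat)
    (mul : 'cV[K]_n -> 'cV[K]_n -> 'cV[K]_n) (x : 'cV[K]_n) : 'M[K]_n :=
  \matrix_(i, j) (mul x (basis_vec K j)) i 0.

(* span(e_1,...,e_{n-2}) : vectors whose coordinates n-1 and n vanish. *)
Definition span_first (K : fieldType) (n : nat) (v : 'cV[K]_n) : Prop :=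
  forall i : 'I_n, (n - 2 <= i)%N -> v i 0 = 0.

Definition two_sided_ideal (K : fieldType) (n : nat)
    (mul : 'cV[K]_n -> 'cV[K]_n -> 'cV[K]_n) (I : 'cV[K]_n -> Prop) : Prop :=
  (I 0) /\ (forall (a : K) u v, I u -> I v -> I (a *: u + v)) /\
  (forall x y, I y -> I (mul x y) /\ I (mul y x)).

From HB Require Import structures.
From mathcomp Require Import all_boot all_order all_algebra all_field zify.
Import GRing.Theory.
Local Open Scope ring_scope.

(* Write L(x) for
   the matrix of left multiplication by x, so that x.y = L(x) y and
   L(x) = sum_k x_k L(e_k).
   1. Every L(x) is upper triangular with alpha(x) as only eigenvalue, so its
      diagonal is constant equal to alpha(x); hence L(e_{n-1}) has diagonal 1
      and the L(e_k), k < n-1, have zero diagonal.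
   2. (Corner lemma) In an algebra satisfying (x.y).z = (x.z).y whose left
      multiplications are all upper triangular, if L(e_c) has a nonzero
      diagonal then L(e_k)_{p,c} = 0 whenever k < p.  Indeed the (p,k) entry of
      the triangular L(e_c.e_c) vanishes, and (e_c.e_c).e_k = (e_c.e_k).e_c
      expands, by triangularity of L(e_c), into L(e_c)_{k,k} L(e_k)_{p,c} plus
      terms that vanish by strong induction on k.
   3. With p = n-2, c = n-1 this is the first claim.  It also shows that the
      last two rows of L(e_k), k < n-2, vanish; so L(y) kills coordinates
      n-2, n-1 for y in span(e_0..e_{n-3}) (left ideal), while triangular
      matrices preserve that span (right ideal). *)

Lemma trig_diag_eigenvalue (K : fieldType) (n : nat) (A : 'M[K]_n) (i : 'I_n) :
  (forall i j : 'I_n, (j < i)%N -> A i j = 0) -> eigenvalue A (A i i).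
Proof.
move=> A_trig; rewrite /eigenvalue /eigenspace kermx_eq0 row_free_unit unitmxE.
rewrite -det_tr det_trig; last first.
  apply/is_trig_mxP => a b lt_ab; rewrite !mxE (A_trig b a) //.
  by rewrite -val_eqE /= (gtn_eqF lt_ab) mulr0n subr0.
by rewrite (bigD1 i) //= !mxE eqxx mulr1n subrr mul0r unitr0.
Qed.

Lemma trig_mul_prefix {R : pzRingType} {n r : nat} {A : 'M[R]_n} {v : 'cV[R]_n} :
  (forall i j : 'I_n, (j < i)%N -> A i j = 0) ->
  (forall i : 'I_n, (r <= i)%N -> v i 0 = 0) ->
  forall i : 'I_n, (r <= i)%N -> (A *m v) i 0 = 0.
Proof.
move=> A_trig v_supp i le_ri; rewrite mxE; apply: big1 => j _.
have [lt_ji | le_ij] := ltnP j i; first by rewrite A_trig ?mul0r.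
by rewrite v_supp ?mulr0 //; apply: leq_trans le_ij.
Qed.

Section BilinearProduct.
Variables (K : fieldType) (n : nat) (mul : 'cV[K]_n -> 'cV[K]_n -> 'cV[K]_n).
Hypothesis mul_bilinear : bilinear_prod mul.

Lemma mul0x z : mul 0 z = 0.
Proof.
case: mul_bilinear => mulDl _; have := mulDl 1 0 0 z; rewrite !scale1r addr0.
by move/(congr1 (fun t => t - mul 0 z)); rewrite addrK subrr => <-.
Qed.

Lemma mulx0 z : mul z 0 = 0.
Proof.
case: mul_bilinear => _ mulDr; have := mulDr 1 z 0 0; rewrite !scale1r addr0.
by move/(congr1 (fun t => t - mul z 0)); rewrite addrK subrr => <-.
Qed.

Lemma mul_suml (c : 'I_n -> K) (v : 'I_n -> 'cV[K]_n) z :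
  mul (\sum_i c i *: v i) z = \sum_i c i *: mul (v i) z.
Proof.
apply: (big_rec2 (fun a b => mul a z = b)); first exact: mul0x.
by move=> i y1 y2 _ <-; case: mul_bilinear => mulDl _; rewrite mulDl.
Qed.

Lemma mul_sumr (c : 'I_n -> K) (v : 'I_n -> 'cV[K]_n) z :
  mul z (\sum_i c i *: v i) = \sum_i c i *: mul z (v i).
Proof.
apply: (big_rec2 (fun a b => mul z a = b)); first exact: mulx0.
by move=> i y1 y2 _ <-; case: mul_bilinear => _ mulDr; rewrite mulDr.
Qed.

Lemma basis_decomp (v : 'cV[K]_n) : v = \sum_i v i 0 *: basis_vec K i.
Proof.
by rewrite {1}(matrix_sum_delta v); apply: eq_bigr => i _; rewrite big_ord1.
Qed.

Lemma LmxE x (i j : 'I_n) : Lmx mul x i j = mul x (basis_vec K j) i 0.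
Proof. by rewrite mxE. Qed.

Lemma mul_Lmx x y : mul x y = Lmx mul x *m y.
Proof.
apply/matrixP => i k; rewrite ord1 {1}(basis_decomp y) mul_sumr summxE mxE.
by apply: eq_bigr => j _; rewrite LmxE mxE mulrC.
Qed.

Lemma Lmx_coord x (i j : 'I_n) :
  Lmx mul x i j = \sum_k x k 0 * Lmx mul (basis_vec K k) i j.
Proof.
rewrite LmxE {1}(basis_decomp x) mul_suml summxE.
by apply: eq_bigr => k _; rewrite mxE LmxE.
Qed.

Hypothesis mul_rcomm : forall x y z, mul (mul x y) z = mul (mul x z) y.
Hypothesis L_trig : forall x (i j : 'I_n), (j < i)%N -> Lmx mul x i j = 0.

Lemma Lmx_corner_vanishes (p c : 'I_n) :
  (forall i : 'I_n, Lmx mul (basis_vec K c) i i != 0) ->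
  forall k : 'I_n, (k < p)%N -> Lmx mul (basis_vec K k) p c = 0.
Proof.
move=> c_diag k; have [m lt_km] := ubnP k; elim: m => // m IH in k lt_km *.
move=> lt_kp; set ec := basis_vec K c.
have corner : mul (mul ec (basis_vec K k)) ec p 0 = 0.
  by rewrite -mul_rcomm -LmxE L_trig.
rewrite -LmxE Lmx_coord (bigD1 k) //= big1 ?addr0 -?LmxE in corner.
  by move/eqP: corner; rewrite mulf_eq0 (negbTE (c_diag k)) => /eqP.
move=> i ne_ik; rewrite -LmxE.
have [lt_ik | lt_ki | eq_ik] := ltngtP i k.
- by rewrite IH ?mulr0 //; [apply: leq_trans lt_ik _ | apply: ltn_trans lt_kp].
- by rewrite L_trig ?mul0r.
- by rewrite (val_inj eq_ik) eqxx in ne_ik.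
Qed.

End BilinearProduct.

Section NormalizedWeight.
Variables (K : fieldType) (n : nat) (mul : 'cV[K]_n -> 'cV[K]_n -> 'cV[K]_n).
Variable alpha : 'cV[K]_n -> K.
Hypothesis mul_bilinear : bilinear_prod mul.
Hypothesis mul_rcomm : forall x y z, mul (mul x y) z = mul (mul x z) y.
Hypothesis L_trig : forall x (i j : 'I_n), (j < i)%N -> Lmx mul x i j = 0.
Hypothesis L_diag : forall x (i : 'I_n), Lmx mul x i i = alpha x.
Hypothesis alpha_basis :
  forall k : 'I_n, alpha (basis_vec K k) = if (k == n.-1 :> nat) then 1 else 0.

(* First claim: a^k_{n-1,n} = 0 for k < n-2 (0-indexed: entry (n-2, n-1)). *)
Lemma corner_entry_vanishes (k p c : 'I_n) :
  (k < n - 2)%N -> (p : nat) = (n - 2)%N -> (c : nat) = n.-1 ->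
  Lmx mul (basis_vec K k) p c = 0.
Proof.
move=> lt_k ep ec.
apply: Lmx_corner_vanishes => //; last by rewrite ep.
by move=> i; rewrite L_diag alpha_basis ec eqxx oner_neq0.
Qed.

Lemma Lmx_basis_low_rows (k m j : 'I_n) :
  (k < n - 2)%N -> (n - 2 <= m)%N -> Lmx mul (basis_vec K k) m j = 0.
Proof.
move=> lt_k le_m; have [lt_jm | lt_mj | eq_jm] := ltngtP j m.
- exact: L_trig.
- by have lt_jn := ltn_ord j; apply: corner_entry_vanishes => //; lia.
- rewrite (val_inj eq_jm) L_diag alpha_basis; case: eqP => // ek; lia.
Qed.

Lemma Lmx_span_low_rows y (m j : 'I_n) :
  span_first y -> (n - 2 <= m)%N -> Lmx mul y m j = 0.
Proof.
move=> y_span le_m; rewrite Lmx_coord //; apply: big1 => k _.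
have [le_k | lt_k] := leqP (n - 2) k; first by rewrite y_span ?mul0r.
by rewrite Lmx_basis_low_rows ?mulr0.
Qed.

Lemma span_first_ideal : two_sided_ideal mul (@span_first K n).
Proof.
split; first by move=> i _; rewrite mxE.
split.
  by move=> a u v u_span v_span i le_i; rewrite !mxE u_span ?v_span ?mulr0 ?addr0.
move=> x y y_span; split => m le_m; rewrite mul_Lmx //.
  exact: (trig_mul_prefix (L_trig x) y_span).
rewrite mxE; apply: big1 => j _.
by rewrite Lmx_span_low_rows ?mul0r.
Qed.

End NormalizedWeight.

Theorem lemma2p3 (K : closedFieldType) (n : nat)
    (mul : 'cV[K]_n -> 'cV[K]_n -> 'cV[K]_n) (alpha : 'cV[K]_n -> K) :
  [pchar K] =i pred0 ->
  (2 <= n)%N ->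
  bilinear_prod mul ->
  LR_identities mul ->
  lie_nilpotent (lie_bracket mul) ->
  (* single weight alpha: each L(x) has alpha(L(x)) as its only eigenvalue *)
  (forall x (a : K), eigenvalue (Lmx mul x) a = (a == alpha x)) ->
  (exists x, alpha x != 0) ->
  (* all L(x) upper triangular in the basis e *)
  (forall x (i j : 'I_n), (j < i)%N -> Lmx mul x i j = 0) ->
  (* normalization: alpha(L(e_n)) = 1, alpha(L(e_k)) = 0 for k <= n-1 *)
  (forall k : 'I_n, alpha (basis_vec K k) = if (k == n.-1 :> nat) then 1 else 0) ->
  (forall (k i j : 'I_n), (k < n - 2)%N -> (i : nat) = (n - 2)%N ->
      (j : nat) = n.-1 -> Lmx mul (basis_vec K k) i j = 0)
  /\ two_sided_ideal mul (@span_first K n).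
Proof.
move=> _ _ mul_bilinear [_ mul_rcomm] _ single_weight _ L_trig alpha_basis.
have L_diag x (i : 'I_n) : Lmx mul x i i = alpha x.
  by apply/eqP; rewrite -single_weight; apply: trig_diag_eigenvalue; apply: L_trig.
split; first exact: corner_entry_vanishes.
exact: span_first_ideal.
Qed.
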